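(* Let $s\in(0,1)$ and let $E\subset\mathbb{R}^n$ be a set of locally finite $s$-perimeter. Then \[ \partial^-E=\{x\in\mathbb{R}^n: P_s^L(E,B_r(x))>0 \text{ for every } r>0\}. \]
   Context: $\mathcal L_s(A,B):=\int_A\int_B|x-y|^{-n-s}dx\,dy$; $P_s^L(E,\Omega):=\mathcal L_s(E\cap\Omega,E^c\cap\Omega)$; $P_s(E,\Omega):=P_s^L(E,\Omega)+\mathcal L_s(E\cap\Omega,E^c\setminus\Omega)+\mathcal L_s(E\setminus\Omega,E^c\cap\Omega)$. $E$ has locally finite $s$-perimeter if $P_s(E,\Omega)<\infty$ for every bounded open $\Omega$. The measure theoretic boundary is $\partial^-E:=\{x: 0<|E\cap B_r(x)|<\omega_nr^n\ \forall r>0\}$, where $\omega_n=|B_1|$. *)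

From HB Require Import structures.
From mathcomp Require Import all_boot all_order all_algebra.
From mathcomp Require Import all_classical all_reals all_analysis.
Set Implicit Arguments. Unset Strict Implicit. Unset Printing Implicit Defensive.
Import Order.TTheory GRing.Theory Num.Theory.
Import numFieldNormedType.Exports.
Local Open Scope classical_set_scope.
Local Open Scope ring_scope.

(* Points of R^n are n-tuples of reals; n.-tuple R carries the library's
   product sigma-algebra (= Borel sets of R^n). *)

Section Defs.
Variable R : realType.

Definition enorm (n : nat) (x : n.-tuple R) : R :=
  Num.sqrt (\sum_(i < n) (tnth x i) ^+ 2).
Definition edist (n : nat) (x y : n.-tuple R) : R :=
  Num.sqrt (\sum_(i < n) (tnth x i - tnth y i) ^+ 2).

Definition eball (n : nat) (x : n.-tuple R) (r : R) : set (n.-tuple R) :=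
  [set y | edist x y < r].

Definition origin (n : nat) : n.-tuple R := [tuple of nseq n 0].

Definition open_n (n : nat) (O : set (n.-tuple R)) : Prop :=
  forall x, O x -> exists2 r : R, 0 < r & eball x r `<=` O.
Definition bounded_n (n : nat) (O : set (n.-tuple R)) : Prop :=
  exists M : R, O `<=` eball (origin n) M.

(* Lebesgue integral of a nonnegative function on R^n, defined as the
   iterated (Tonelli) integral against the one-dimensional Lebesgue measure. *)
Fixpoint iint (n : nat) : (n.-tuple R -> \bar R) -> \bar R :=
  match n return (n.-tuple R -> \bar R) -> \bar R with
  | 0 => fun f => f [tuple]
  | m.+1 => fun f =>
      (\int[@lebesgue_measure R]_x iint (fun t : m.-tuple R => f (cons_tuple x t)))%E
  end.

Definition lebn (n : nat) (A : set (n.-tuple R)) : \bar R :=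
  iint (fun x => (\1_A x)%:E).

Definition leb_measurable (n : nat) (E : set (n.-tuple R)) : Prop :=
  exists F N : set (n.-tuple R),
    [/\ measurable F, measurable N, lebn N = 0%E &
        (E `\` F) `|` (F `\` E) `<=` N].

Definition omega (n : nat) : \bar R := lebn (eball (origin n) 1).

Definition Ls (n : nat) (s : R) (A B : set (n.-tuple R)) : \bar R :=
  iint (fun x => ((\1_A x)%:E *
     iint (fun y => ((\1_B y)%:E * (powR (edist x y) (- (n%:R + s)))%:E)))%E).

Definition PsL (n : nat) (s : R) (E O : set (n.-tuple R)) : \bar R :=
  Ls s (E `&` O) (~` E `&` O).

Definition Ps (n : nat) (s : R) (E O : set (n.-tuple R)) : \bar R :=
  (PsL s E O + Ls s (E `&` O) (~` E `\` O) + Ls s (E `\` O) (~` E `&` O))%E.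

Definition locally_finite_Ps (n : nat) (s : R) (E : set (n.-tuple R)) : Prop :=
  forall O, open_n O -> bounded_n O -> (Ps s E O < +oo)%E.

Definition mboundary (n : nat) (E : set (n.-tuple R)) : set (n.-tuple R) :=
  [set x | forall r : R, 0 < r ->
     (0 < lebn (E `&` eball x r))%E /\
     (lebn (E `&` eball x r) < omega n * (r ^+ n)%:E)%E].

End Defs.

From Pilot Require Import Defs.
From HB Require Import structures.
From mathcomp Require Import all_boot all_order all_algebra.
From mathcomp Require Import all_classical all_reals all_analysis.
From mathcomp Require Import measurable_realfun ring lra.
Import Order.TTheory GRing.Theory Num.Theory.
Import numFieldNormedType.Exports.
Local Open Scope classical_set_scope.
Local Open Scope ring_scope.
Set Implicit Arguments. Unset Strict Implicit. Unset Printing Implicit Defensive.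

(* Write E = F up to a Borel null set N, with F Borel.  The iterated integrals
   defining |.| and P^L_s do not see N (for a non-measurable integrand the
   integral is the supremum over measurable simple minorants, which ignores
   null sets), so on a ball B = B_r(x) we may replace E by F.  Put
   a = |F ∩ B| and g = |B \ F|: then a + g = |B| = omega_n r^n < +oo, so
   x ∈ ∂^-E iff a > 0 and g > 0 for every r.  On B × B the kernel
   |y - z|^(-n-s) is at least (2r)^(-n-s), whence P^L_s(F, B) >= (2r)^(-n-s) g a;
   conversely, if a = 0 (resp. g = 0) the outer (resp. inner) integrand
   vanishes almost everywhere and P^L_s(F, B) = 0. *)

Section integral_nonmeasurable.
Context d (T : measurableType d) (R : realType) (mu : {measure set T -> \bar R}).
Local Open Scope ereal_scope.
Import HBNNSimple.

Lemma ge0_le_integral_nonmeas (f g : T -> \bar R) : (forall x, 0 <= f x) ->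
  (forall x, f x <= g x) -> \int[mu]_x f x <= \int[mu]_x g x.
Proof.
move=> f0 fg; have g0 x : 0 <= g x by exact: le_trans (f0 x) (fg x).
rewrite !ge0_integralTE//; apply: ereal_sup_le => _ [h hf <-].
by exists h => //= x; exact: le_trans (hf x) (fg x).
Qed.

Lemma ae_le_integral_nonmeas (N : set T) (f g : T -> \bar R) :
  measurable N -> mu N = 0 -> (forall x, 0 <= f x) -> (forall x, 0 <= g x) ->
  (forall x, ~ N x -> f x <= g x) -> \int[mu]_x f x <= \int[mu]_x g x.
Proof.
move=> mN N0 f0 g0 fg; rewrite [leLHS]ge0_integralTE//.
apply: ge_ereal_sup => _ [h hf <-].
have := integral_nnsfun mu measurableT h; rewrite patch_setT => <-.
have mhN : measurable_fun setT (fun x => (h x * \1_(~` N) x)%:E).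
  apply/measurable_EFinP/measurable_funM; first exact: measurable_funPT.
  exact/measurable_indic/measurableC.
rewrite (@ge0_ae_eq_integral _ _ _ mu setT (fun x => (h x)%:E) (fun x => (h x * \1_(~` N) x)%:E))//.
- apply: ge0_le_integral_nonmeas => x; first by rewrite lee_fin mulr_ge0.
  rewrite /indic; have [Nx|Nx] := pselect (N x).
    by rewrite memNset//= mulr0 g0.
  by rewrite mem_set//= mulr1; exact: le_trans (hf x) (fg x Nx).
- by apply/measurable_EFinP; exact: measurable_funPT.
- by move=> x _; rewrite lee_fin.
- by move=> x _; rewrite lee_fin mulr_ge0.
- exists N; split => // x /= hNx; apply: contrapT => Nx; apply: hNx => _.
  by rewrite /indic mem_set//= mulr1.
Qed.

Lemma ae_eq_integral_nonmeas (N : set T) (f g : T -> \bar R) :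
  measurable N -> mu N = 0 -> (forall x, 0 <= f x) -> (forall x, 0 <= g x) ->
  (forall x, ~ N x -> f x = g x) -> \int[mu]_x f x = \int[mu]_x g x.
Proof.
move=> mN N0 f0 g0 fg; apply/eqP; rewrite eq_le.
by apply/andP; split; apply: (ae_le_integral_nonmeas mN N0) => // x /fg ->.
Qed.

End integral_nonmeasurable.

Section sigma_finite_pushforward.
Context d1 d2 (X : measurableType d1) (Y : measurableType d2) (R : realType).
Local Open Scope ereal_scope.

Lemma sigma_finite_pushforward (mu : {measure set X -> \bar R}) (f : X -> Y) (g : Y -> X) :
  sigma_finite setT mu -> measurable_fun setT g -> cancel f g ->
  sigma_finite setT (pushforward mu f).
Proof.
move=> [F FT Ffin] mg fK.
exists (fun k => g @^-1` F k); first by rewrite -preimage_bigcup -FT.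
move=> k; have [mFk muFk] := Ffin k; split.
  by rewrite -[X in measurable X]setTI; exact: mg.
by rewrite /pushforward -comp_preimage (_ : g \o f = id)//; exact/funext/fK.
Qed.

End sigma_finite_pushforward.

Section tuple_measure.
Variable R : realType.
Local Open Scope ereal_scope.

Definition cons_pair m (p : measurableTypeR R * m.-tuple R) : m.+1.-tuple R :=
  cons_tuple p.1 p.2.

Definition uncons m (x : m.+1.-tuple R) : measurableTypeR R * m.-tuple R :=
  (thead x, [tuple of behead x]).

Lemma measurable_cons_pair m : measurable_fun setT (@cons_pair m).
Proof. exact: measurable_cons measurable_fst measurable_snd. Qed.

Lemma measurable_cons_tuple m (t : R) :
  measurable_fun setT (fun x : m.-tuple R => cons_tuple t x).
Proof. exact: measurable_cons. Qed.

Lemma measurable_uncons m : measurable_fun setT (@uncons m).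
Proof.
apply/measurable_fun_pairP; split; first exact: (@measurable_tnth _ R m.+1 ord0).
exact: measurable_behead.
Qed.

Lemma cons_pairK m : cancel (@cons_pair m) (@uncons m).
Proof. by move=> [t x]; congr pair; exact: val_inj. Qed.

Section cons_measure.
Variables (m : nat) (mu : {sigma_finite_measure set (m.-tuple R) -> \bar R}).

Definition cons_measure := pushforward (@lebesgue_measure R \x mu) (@cons_pair m).

(* Neither structure is inferred: the pushforward measure instance depends on a
   measurability proof, and the canonical sigma-finite structure on [\x] is
   the one for subprobabilities. *)
HB.instance Definition _ := Measure.copy cons_measure
  (measure_function_pushforward__canonical__measure_function_Measure
    (@lebesgue_measure R \x mu) (@measurable_cons_pair m)).

Let sigma_finite_product : sigma_finite setT (@lebesgue_measure R \x mu).
Proof.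
exact: isSigmaFinite.sigma_finiteT
  (lebesgue_integral_fubini.measure_function_Measure_isSigmaFinite__to__measure_function_isSigmaFinite
    (@lebesgue_measure R) mu).
Qed.

HB.instance Definition _ := Measure_isSigmaFinite.Build _ _ _ cons_measure
  (sigma_finite_pushforward sigma_finite_product (@measurable_uncons m) (@cons_pairK m)).

End cons_measure.

Fixpoint leb_tuple (m : nat) : {sigma_finite_measure set (m.-tuple R) -> \bar R} :=
  match m with
  | 0 => [the {sigma_finite_measure set _ -> \bar R} of \d_ ([tuple] : 0.-tuple R)]
  | m'.+1 => [the {sigma_finite_measure set _ -> \bar R} of cons_measure (leb_tuple m')]
  end.

Lemma iint_leb_tuple m (f : m.-tuple R -> \bar R) : measurable_fun setT f ->
  (forall x, 0 <= f x) -> iint f = \int[leb_tuple m]_x f x.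
Proof.
elim: m f => [|m IH] f mf f0.
  rewrite /= (integral_dirac _ measurableT mf) diracT mul1e.
  by congr f; apply: val_inj; case: ([tuple] : 0.-tuple R) => -[].
have mfc : measurable_fun setT (f \o @cons_pair m).
  exact: measurableT_comp mf (@measurable_cons_pair m).
have := ge0_integral_pushforward (@measurable_cons_pair m)
  (@lebesgue_measure R \x leb_tuple m) measurableT mf (fun x _ => f0 x).
rewrite preimage_setT /= => ->; rewrite (fubini_tonelli1 _ mfc) => [|x]; last exact: f0.
apply: eq_integral => t _; apply: IH => //.
by apply: (measurableT_comp mf); exact: measurable_cons_tuple.
Qed.

Lemma lebnE n (A : set (n.-tuple R)) : measurable A -> lebn A = leb_tuple n A.
Proof.
move=> mA; rewrite /lebn iint_leb_tuple; first by rewrite integral_indic// setIT.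
  exact/measurable_EFinP/measurable_indic.
by move=> x; rewrite lee_fin.
Qed.

Lemma iint_ge0 m (f : m.-tuple R -> \bar R) : (forall x, 0 <= f x) -> 0 <= iint f.
Proof.
elim: m f => [|m IH] f f0 /=; first exact: f0.
by apply: integral_ge0 => x _; exact: IH.
Qed.

Lemma iint_le m (f g : m.-tuple R -> \bar R) : (forall x, 0 <= f x) ->
  (forall x, f x <= g x) -> iint f <= iint g.
Proof.
elim: m f g => [|m IH] f g f0 fg /=; first exact: fg.
apply: ge0_le_integral_nonmeas => x; first exact: iint_ge0.
exact: IH.
Qed.

Lemma iint0 m : iint (fun _ : m.-tuple R => 0) = 0.
Proof. by elim: m => [//|m IH] /=; under eq_integral do rewrite IH; exact: integral0. Qed.

Lemma iint_ae_eq m (N : set (m.-tuple R)) (f g : m.-tuple R -> \bar R) :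
  measurable N -> leb_tuple m N = 0 ->
  (forall x, 0 <= f x) -> (forall x, 0 <= g x) ->
  (forall x, ~ N x -> f x = g x) -> iint f = iint g.
Proof.
elim: m N f g => [|m IH] N f g mN N0 f0 g0 fg /=.
  apply: fg => N0'; move: N0; rewrite /= /dirac indicE mem_set//.
  by move/eqP; rewrite eqe oner_eq0.
have mN' : measurable (@cons_pair m @^-1` N).
  by rewrite -[X in measurable X]setTI; exact: measurable_cons_pair.
pose section_measure := leb_tuple m \o xsection (@cons_pair m @^-1` N).
have msection : measurable_fun setT section_measure.
  exact: measurable_fun_xsection.
(* The measure of the sections of N vanishes outside a Lebesgue null set M. *)
have /(ae_eq_integral_abs _ measurableT msection).1 [M [mM M0 MN]] :
    \int[@lebesgue_measure R]_t `|section_measure t| = 0.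
  rewrite -N0; apply: eq_integral => t _.
  by rewrite gee0_abs//; exact: measure_ge0.
apply: (ae_eq_integral_nonmeas mM M0).
- by move=> t; apply: iint_ge0 => x; exact: f0.
- by move=> t; apply: iint_ge0 => x; exact: g0.
move=> t Mt; apply: (IH (xsection (@cons_pair m @^-1` N) t)) => //.
- exact: measurable_xsection.
- by apply: contrapT => sec_ne0; apply: Mt; apply: MN => /(_ I).
- by move=> x Nx; apply: fg => ?; apply: Nx; rewrite /xsection/= inE.
Qed.

End tuple_measure.

Section affine_change_of_variables.
Variable R : realType.
Local Open Scope ereal_scope.

Section lebesgue_measure_affine.
Variables (a r : R).
Hypothesis r0 : (0 < r)%R.

Let affine1 (u : measurableTypeR R) : measurableTypeR R := (a + r * u)%R.

Let measurable_affine1 : measurable_fun setT affine1.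
Proof. by apply: measurable_funD => //; exact: measurable_funM. Qed.

Let affine1_measure := measure_function_pushforward__canonical__measure_function_Measure
  (@lebesgue_measure R) measurable_affine1.

Let lebesgue_measure_affine (A : set R) : measurable A ->
  lebesgue_measure A = mscale (NngNum (ltW r0)) affine1_measure A.
Proof.
apply: lebesgue_measure_unique => _ /ocitvP[->|[[x1 x2] /= x12 ->]].
  by rewrite !measure0.
rewrite /mscale /= /pushforward.
have -> : affine1 @^-1` `]x1, x2] = `]((x1 - a) / r)%R, ((x2 - a) / r)%R]%classic.
  apply/seteqP; split => u /=; rewrite /affine1 !in_itv /= => /andP[h1 h2];
    apply/andP; split.
  - by rewrite ltr_pdivrMr // ltrBlDl mulrC.
  - by rewrite ler_pdivlMr // lerBrDl mulrC.
  - by rewrite -ltrBlDl mulrC -ltr_pdivrMr.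
  - by rewrite -lerBrDl mulrC -ler_pdivlMr.
rewrite !lebesgue_measure_itv /= !lte_fin x12 ltr_pM2r ?invr_gt0 // ltrD2r x12.
by rewrite -!EFinB -EFinM; congr EFin; field; rewrite gt_eqF.
Qed.

Lemma ge0_integral_affine (f : R -> \bar R) : measurable_fun setT f ->
  (forall x, 0 <= f x) ->
  \int[lebesgue_measure]_t f t = r%:E * \int[lebesgue_measure]_u f (a + r * u)%R.
Proof.
move=> mf f0; rewrite (eq_measure_integral (mscale (NngNum (ltW r0)) affine1_measure)).
  rewrite ge0_integral_mscale//=; congr (_ * _).
  have := ge0_integral_pushforward measurable_affine1 lebesgue_measure
    measurableT mf (fun x _ => f0 x).
  by rewrite preimage_setT.
by move=> A mA _; exact: lebesgue_measure_affine.
Qed.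

End lebesgue_measure_affine.

Definition tuple_affine n (a : n.-tuple R) (r : R) (y : n.-tuple R) : n.-tuple R :=
  [tuple (tnth a i + r * tnth y i)%R | i < n].

Lemma tnth_tuple_affine n (a : n.-tuple R) r y i :
  tnth (tuple_affine a r y) i = (tnth a i + r * tnth y i)%R.
Proof. exact: tnth_mktuple. Qed.

Lemma tuple_affine_cons m t (a : m.-tuple R) r u (y : m.-tuple R) :
  tuple_affine (cons_tuple t a) r (cons_tuple u y) = cons_tuple (t + r * u)%R (tuple_affine a r y).
Proof.
apply: eq_from_tnth => i; rewrite tnth_tuple_affine.
by case: (unliftP ord0 i) => [j ->|->]; rewrite ?tnthS ?tnth_tuple_affine ?tnth0.
Qed.

Lemma measurable_tuple_affine n (a : n.-tuple R) r : measurable_fun setT (tuple_affine a r).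
Proof.
apply/measurable_fun_tnthP => i.
rewrite (_ : ((@tnth n R)^~ i \o tuple_affine a r) = (fun y => tnth a i + r * tnth y i)%R).
  by apply: measurable_funD => //; apply: measurable_funM => //; exact: measurable_tnth.
by apply: funext => y /=; rewrite tnth_tuple_affine.
Qed.

Lemma iint_tuple_affine m (a : m.-tuple R) (r : R) (f : m.-tuple R -> \bar R) : (0 < r)%R ->
  measurable_fun setT f -> (forall x, 0 <= f x) ->
  iint f = (r ^+ m)%:E * iint (fun y => f (tuple_affine a r y)).
Proof.
move=> r0; elim: m a f => [|m IH] a f mf f0.
  by rewrite /= expr0 mul1e (tuple0 (tuple_affine a r [tuple])).
case/tupleP: a => t a.
pose g u := iint (fun y => f (cons_tuple u (tuple_affine a r y))).
have mg : measurable_fun setT g.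
  pose h (p : measurableTypeR R * m.-tuple R) := f (cons_pair (p.1, tuple_affine a r p.2)).
  have mh : measurable_fun setT h.
    apply: (measurableT_comp mf); apply: (measurableT_comp (@measurable_cons_pair R m)).
    apply/measurable_fun_pairP; split; first exact: measurable_fst.
    exact: measurableT_comp (measurable_tuple_affine a r) measurable_snd.
  rewrite (_ : g = fubini_F (leb_tuple R m) h).
    exact: (measurable_fun_fubini_tonelli_F h mh (fun p => f0 _)).
  apply: funext => u; rewrite /g /fubini_F iint_leb_tuple//.
  apply: (measurableT_comp mf).
  by apply: measurableT_comp (measurable_tuple_affine a r); exact: measurable_cons_tuple.
have g0 u : 0 <= g u by apply: iint_ge0.
transitivity (\int[lebesgue_measure]_u ((r ^+ m)%:E * g u)).
  apply: eq_integral => u _; apply: IH => //.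
  by apply: (measurableT_comp mf); exact: measurable_cons_tuple.
rewrite ge0_integralZl_EFin ?exprn_ge0 ?(ltW r0)// (ge0_integral_affine t r0 mg g0).
rewrite exprSr EFinM -muleA; congr (_ * (_ * _)); apply: eq_integral => u _.
by rewrite /g; congr iint; apply: funext => y; rewrite tuple_affine_cons.
Qed.

End affine_change_of_variables.

Section euclidean_balls.
Variable R : realType.

Definition sqdist n (x y : n.-tuple R) : R := \sum_(i < n) (tnth x i - tnth y i) ^+ 2.

Lemma sqdist_ge0 n (x y : n.-tuple R) : 0 <= sqdist x y.
Proof. by apply: sumr_ge0 => i _; exact: sqr_ge0. Qed.

Lemma sqdist_eq0 n (x y : n.-tuple R) : sqdist x y = 0 -> x = y.
Proof.
move/eqP; rewrite psumr_eq0 => [/allP xy|i _]; last exact: sqr_ge0.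
apply: eq_from_tnth => i; move: (xy i (mem_index_enum i)).
by rewrite implyTb sqrf_eq0 subr_eq0 => /eqP.
Qed.

Lemma sqdist_le n (x y z : n.-tuple R) : sqdist y z <= 2 * (sqdist x y + sqdist x z).
Proof.
rewrite /sqdist -big_split mulr_sumr /=; apply: ler_sum => i _.
have := sqr_ge0 (2 * tnth x i - tnth y i - tnth z i); rewrite !expr2 => ?; nra.
Qed.

Lemma edist_ltE n (x y : n.-tuple R) r : 0 < r -> (Defs.edist x y < r) = (sqdist x y < r ^+ 2).
Proof.
move=> r0; rewrite /Defs.edist -(ltr_sqrt (sqdist x y) (exprn_gt0 2 r0)).
by rewrite sqrtr_sqr gtr0_norm.
Qed.

Lemma measurable_eball n (x : n.-tuple R) r : measurable (eball x r).
Proof.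
have [r0|r0] := ltP 0 r.
  rewrite (_ : eball x r = sqdist x @^-1` `]-oo, r ^+ 2[).
    rewrite -[X in measurable X]setTI; apply: (_ : measurable_fun _ _) => //.
    apply: measurable_sum => i; apply: measurable_funX; apply: measurable_funB => //.
    exact: measurable_tnth.
  by apply/seteqP; split => y; rewrite /eball /= edist_ltE // in_itv.
rewrite (_ : eball x r = set0) //; apply/seteqP; split => y // /=.
by rewrite /eball /= ltNge (le_trans r0) ?sqrtr_ge0.
Qed.

Lemma sqdist_tuple_affine n (x y : n.-tuple R) r :
  sqdist x (tuple_affine x r y) = r ^+ 2 * sqdist (origin R n) y.
Proof.
rewrite /sqdist mulr_sumr; apply: eq_bigr => i _.
by rewrite tnth_tuple_affine /origin tnth_nseq; ring.
Qed.

Lemma eball_tuple_affine n (x y : n.-tuple R) r : 0 < r ->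
  eball x r (tuple_affine x r y) = eball (origin R n) 1 y.
Proof.
move=> r0; rewrite /eball /= !edist_ltE // sqdist_tuple_affine (expr1n _ 2).
by rewrite -[ltRHS]mulr1 ltr_pM2l // exprn_gt0.
Qed.

Lemma sqdist_cons m (a b : R) (x y : m.-tuple R) :
  sqdist (cons_tuple a x) (cons_tuple b y) = (a - b) ^+ 2 + sqdist x y.
Proof. by rewrite /sqdist big_ord_recl !tnth0; under eq_bigr do rewrite !tnthS. Qed.

Lemma unit_eball_cons m t (y : m.-tuple R) :
  eball (origin R m.+1) 1 (cons_tuple t y) ->
  `](-1), 1[%classic t /\ eball (origin R m) 1 y.
Proof.
have -> : origin R m.+1 = cons_tuple 0 (origin R m) by exact: val_inj.
rewrite /eball /= !edist_ltE // (expr1n _ 2).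
rewrite sqdist_cons sub0r sqrrN => ty; split.
  have t2 : t ^+ 2 < 1 by apply: le_lt_trans ty; rewrite lerDl sqdist_ge0.
  by rewrite /= in_itv /=; apply/andP; split; nra.
by apply: le_lt_trans ty; rewrite lerDr sqr_ge0.
Qed.

Local Open Scope ereal_scope.

Lemma leb_tuple_eball n (x : n.-tuple R) r : (0 < r)%R ->
  leb_tuple R n (eball x r) = (r ^+ n)%:E * leb_tuple R n (eball (origin R n) 1).
Proof.
move=> r0; rewrite -!lebnE; try exact: measurable_eball.
rewrite /lebn (iint_tuple_affine x r0)//; last first.
  by apply/measurable_EFinP/measurable_indic; exact: measurable_eball.
congr (_ * iint _); apply: funext => y.
rewrite !indicE (_ : (_ \in eball x r) = (y \in eball (origin R n) 1))//.
by apply/idP/idP => /set_mem; rewrite ?eball_tuple_affine// => ?;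
  apply/mem_set; rewrite ?eball_tuple_affine.
Qed.

Lemma lebn_unit_eball_le n : lebn (eball (origin R n) 1) <= (2 ^+ n)%:E.
Proof.
elim: n => [|m IH] /=; first by rewrite expr0 lee_fin indicE; case: (_ \in _).
pose I := (`](-1), 1[%classic : set (measurableTypeR R))%R.
apply: (@le_trans _ _ (\int[lebesgue_measure]_t ((2 ^+ m)%:E * (\1_I t)%:E))).
  apply: ge0_le_integral_nonmeas => t; first by apply: iint_ge0 => y; rewrite lee_fin.
  have [It|It] := pselect (I t).
    rewrite indicE mem_set// mule1; apply: le_trans IH; apply: iint_le => y.
      by rewrite lee_fin.
    rewrite !indicE lee_fin; case: (boolP (_ \in _)) => // /set_mem/unit_eball_cons.
    by case=> _ ?; rewrite mem_set.
  rewrite indicE memNset// mule0 -(iint0 R m); apply: iint_le => y; first by rewrite lee_fin.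
  by rewrite indicE memNset// => /unit_eball_cons[/It].
have mI : measurable I by exact: measurable_itv.
rewrite ge0_integralZl_EFin//; last by apply/measurable_EFinP; exact: measurable_indic.
rewrite integral_indic// setIT (_ : _ I = lebesgue_measure I)//.
rewrite lebesgue_measure_itv /= lte_fin ifT; last by lra.
by rewrite -EFinD opprK -EFinM lee_fin exprSr.
Qed.

Lemma leb_tuple_eball_lty n (x : n.-tuple R) r : (0 < r)%R ->
  leb_tuple R n (eball x r) < +oo.
Proof.
move=> r0; rewrite leb_tuple_eball// -lebnE; last exact: measurable_eball.
rewrite lte_mul_pinfty ?lee_fin ?exprn_ge0 ?(ltW r0)//.
exact: le_lt_trans (lebn_unit_eball_le n) (ltry _).
Qed.

End euclidean_balls.

Section nonlocal_perimeter.
Variable R : realType.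
Local Open Scope ereal_scope.

Lemma iint_indic_mul n (A : set (n.-tuple R)) (k : \bar R) : measurable A -> 0 <= k ->
  iint (fun y => (\1_A y)%:E * k) = k * leb_tuple R n A.
Proof.
move=> mA k0; rewrite iint_leb_tuple; last 2 first.
- apply: emeasurable_funM => //; exact/measurable_EFinP/measurable_indic.
- by move=> y; rewrite mule_ge0 ?lee_fin.
rewrite -integral_cst// [RHS]integral_mkcond; apply: eq_integral => y _.
by rewrite patchE indicE; case: (y \in A); rewrite ?mul1e ?mul0e.
Qed.

Lemma Ls_integrand_ge0 n s (C : set (n.-tuple R)) x :
  0 <= iint (fun y => (\1_C y)%:E * (powR (Defs.edist x y) (- (n%:R + s)))%:E).
Proof. by apply: iint_ge0 => y; rewrite mule_ge0 ?lee_fin ?powR_ge0. Qed.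

Section null_set_invariance.
Variables (n : nat) (N : set (n.-tuple R)).
Hypotheses (mN : measurable N) (N0 : leb_tuple R n N = 0).

Let indic_ae (A A' : set (n.-tuple R)) y : (~ N y -> A y <-> A' y) -> ~ N y ->
  (\1_A y)%:E = (\1_A' y)%:E :> \bar R.
Proof.
move=> AA' Ny; rewrite !indicE (_ : (y \in A) = (y \in A'))//.
by apply/idP/idP => /set_mem/(AA' Ny)/mem_set.
Qed.

Lemma lebn_ae_eq (A A' : set (n.-tuple R)) : (forall y, ~ N y -> A y <-> A' y) ->
  lebn A = lebn A'.
Proof.
move=> AA'; apply: (iint_ae_eq mN N0) => [y|y|y /(indic_ae (AA' y))//].
all: by rewrite lee_fin.
Qed.

Lemma Ls_ae_eq s (A A' C C' : set (n.-tuple R)) :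
  (forall y, ~ N y -> A y <-> A' y) -> (forall y, ~ N y -> C y <-> C' y) ->
  Ls s A C = Ls s A' C'.
Proof.
move=> AA' CC'; apply: (iint_ae_eq mN N0) => [x|x|x Nx].
- by rewrite mule_ge0 ?lee_fin ?Ls_integrand_ge0.
- by rewrite mule_ge0 ?lee_fin ?Ls_integrand_ge0.
rewrite (indic_ae (AA' x) Nx); congr (_ * _).
apply: (iint_ae_eq mN N0) => [y|y|y Ny].
- by rewrite mule_ge0 ?lee_fin ?powR_ge0.
- by rewrite mule_ge0 ?lee_fin ?powR_ge0.
- by rewrite (indic_ae (CC' y) Ny).
Qed.

End null_set_invariance.

Lemma PsL_eq0_in_null n s (F O : set (n.-tuple R)) : measurable (F `&` O) ->
  leb_tuple R n (F `&` O) = 0 -> PsL s F O = 0.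
Proof.
move=> mFO FO0; transitivity (iint (fun _ : n.-tuple R => 0)); last exact: iint0.
rewrite /PsL /Ls.
apply: (iint_ae_eq mFO FO0) => [x|//|x FOx]; first by rewrite mule_ge0 ?lee_fin ?Ls_integrand_ge0.
by rewrite indicE memNset ?mul0e.
Qed.

Lemma PsL_eq0_out_null n s (F O : set (n.-tuple R)) : measurable (~` F `&` O) ->
  leb_tuple R n (~` F `&` O) = 0 -> PsL s F O = 0.
Proof.
move=> mFO FO0; transitivity (iint (fun _ : n.-tuple R => 0)); last exact: iint0.
rewrite /PsL /Ls.
congr iint; apply: funext => x.
rewrite [X in _ * X](_ : _ = 0) ?mule0//.
transitivity (iint (fun _ : n.-tuple R => 0)); last exact: iint0.
apply: (iint_ae_eq mFO FO0) => [y|//|y FOy]; first by rewrite mule_ge0 ?lee_fin ?powR_ge0.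
by rewrite indicE memNset ?mul0e.
Qed.

(* [y <> z] is needed since [0 `^ (- p) = 0] for [p != 0]. *)
Lemma powR_edist_ge n (x y z : n.-tuple R) r p : (0 <= p)%R ->
  eball x r y -> eball x r z -> y <> z ->
  ((2 * r) `^ (- p) <= Defs.edist y z `^ (- p))%R.
Proof.
move=> p0 xy xz yz.
have r0 : (0 < r)%R by apply: le_lt_trans xy; exact: sqrtr_ge0.
move: xy xz; rewrite /eball /= !edist_ltE // => xy xz.
have yz0 : (0 < Defs.edist y z)%R.
  rewrite sqrtr_gt0 lt_def sqdist_ge0 andbT; apply/eqP => /sqdist_eq0; exact: yz.
have yz2r : (Defs.edist y z < 2 * r)%R.
  rewrite edist_ltE ?mulr_gt0 //; apply: le_lt_trans (sqdist_le x y z) _; nra.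
rewrite !powRN lef_pV2 ?posrE ?powR_gt0 ?mulr_gt0 //.
by apply: ge0_ler_powR; rewrite ?nnegrE ?(ltW yz0) ?(ltW yz2r) ?mulr_ge0 ?(ltW r0).
Qed.

Section perimeter_on_ball.
Variables (n : nat) (s : R) (F : set (n.-tuple R)) (x : n.-tuple R) (r : R).
Hypotheses (s0 : (0 < s)%R) (mF : measurable F) (r0 : (0 < r)%R).

Local Notation B := (eball x r).

Let mFB : measurable (F `&` B).
Proof. exact: measurableI (measurable_eball _ _). Qed.

Let mFCB : measurable (~` F `&` B).
Proof. exact: measurableI (measurableC _) (measurable_eball _ _). Qed.

Lemma PsL_eball_ge :
  ((2 * r) `^ (- (n%:R + s)))%:E * leb_tuple R n (~` F `&` B) * leb_tuple R n (F `&` B)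
  <= PsL s F B.
Proof.
set c := ((2 * r) `^ _)%R.
have c0 : (0 <= c)%R by exact: powR_ge0.
have inner y : (F `&` B) y -> c%:E * leb_tuple R n (~` F `&` B) <=
    iint (fun z => (\1_(~` F `&` B) z)%:E * (Defs.edist y z `^ (- (n%:R + s)))%:E).
  move=> [Fy By]; rewrite -iint_indic_mul ?lee_fin//.
  apply: iint_le => z; first by rewrite mule_ge0 ?lee_fin.
  rewrite indicE; case: (boolP (z \in _)) => [/set_mem [nFz Bz]|_]; last by rewrite !mul0e.
  rewrite !mul1e lee_fin; apply: (powR_edist_ge (x := x)) => //.
    by rewrite addr_ge0// ltW.
  by move=> yz; apply: nFz; rewrite -yz.
rewrite -iint_indic_mul ?mule_ge0 ?lee_fin//; apply: iint_le => y.
  by rewrite !mule_ge0 ?lee_fin.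
rewrite indicE; case: (boolP (y \in _)) => [/set_mem FBy|_]; last by rewrite !mul0e.
by rewrite !mul1e; exact: inner.
Qed.

Lemma PsL_eball_gt0 :
  0 < PsL s F B <-> 0 < leb_tuple R n (F `&` B) /\ 0 < leb_tuple R n (~` F `&` B).
Proof.
split => [PsL0|[a0 g0]].
  rewrite !lt0e !measure_ge0 !andbT; split; apply/eqP => null; move: PsL0.
    by rewrite (PsL_eq0_in_null _ mFB null) ltxx.
  by rewrite (PsL_eq0_out_null _ mFCB null) ltxx.
apply: lt_le_trans PsL_eball_ge; rewrite !mule_gt0// lte_fin powR_gt0// mulr_gt0//.
Qed.

Lemma omega_eball_split :
  omega R n * (r ^+ n)%:E = leb_tuple R n (F `&` B) + leb_tuple R n (~` F `&` B).
Proof.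
rewrite -measureU//; last by apply/seteqP; split => // y [[Fy _] []].
rewrite -setIUl setUv setTI /omega lebnE; last exact: measurable_eball.
by rewrite muleC -(leb_tuple_eball x r0).
Qed.

Lemma mboundary_eball_iff :
  0 < leb_tuple R n (F `&` B) /\ leb_tuple R n (F `&` B) < omega R n * (r ^+ n)%:E <->
  0 < PsL s F B.
Proof.
have a_fin : leb_tuple R n (F `&` B) \is a fin_num.
  rewrite ge0_fin_numE ?measure_ge0//; apply: le_lt_trans (leb_tuple_eball_lty x r0).
  apply: le_measure => [||y []//]; rewrite inE//; exact: measurable_eball.
by rewrite omega_eball_split lteDl//; exact: iff_sym PsL_eball_gt0.
Qed.

End perimeter_on_ball.

End nonlocal_perimeter.

Theorem lemma3p1 (R : realType) (n : nat) (s : R) (E : set (n.-tuple R)) :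
  0 < s -> s < 1 ->
  leb_measurable E ->
  locally_finite_Ps s E ->
  mboundary E = [set x | forall r : R, 0 < r -> (0 < PsL s E (eball x r))%E].
Proof.
move=> s0 _ [F [N [mF mN N0 EFN]]] _.
have {}N0 : leb_tuple R n N = 0%E by rewrite -lebnE.
have EF y : ~ N y -> E y <-> F y.
  by move=> Ny; split=> ?; apply: contrapT => ?; apply: Ny; apply: EFN; [left|right].
have EFI O y : ~ N y -> (E `&` O) y <-> (F `&` O) y.
  by move=> /EF EFy; split=> -[/EFy ? ?].
have EFCI O y : ~ N y -> (~` E `&` O) y <-> (~` F `&` O) y.
  by move=> /EF EFy; split=> -[nEy ?]; split=> // /EFy.
have ball_iff x r : 0 < r ->
    (0 < lebn (E `&` eball x r) /\ lebn (E `&` eball x r) < omega R n * (r ^+ n)%:E)%E <->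
    (0 < PsL s E (eball x r))%E.
  move=> r0; rewrite (lebn_ae_eq mN N0 (EFI _)) lebnE; last first.
    exact: measurableI (measurable_eball _ _).
  by rewrite /PsL (Ls_ae_eq mN N0 s (EFI _) (EFCI _)); exact: mboundary_eball_iff.
by rewrite predeqE => x; split=> xE r r0; apply/(ball_iff x r r0); exact: xE.
Qed.
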